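(* Let $m\ge3$. For any $k_1,k_2>0$, as $\epsilon\to0$, \[\mu_m^H(\Pi(k_1\epsilon,k_2\epsilon))\to\frac{\frac{k_2}{k_1}\gamma^{\frac{m-2}{2}}}{1+\frac{k_2}{k_1}\gamma^{\frac{m-2}{2}}},\qquad \mu_1^L(\Pi(k_1\epsilon,k_2\epsilon))\to\frac{\frac{k_1}{k_2}\gamma^{\frac{m-2}{2}}}{1+\frac{k_1}{k_2}\gamma^{\frac{m-2}{2}}}.\]
   Context: The state of nature is $\theta\in\{H,L\}$. $S$ is a finite signal set; conditional on $\theta$, signals are i.i.d. with distribution $\pi_\theta$, $\pi_\theta(s)>0$ for all $s,\theta$, $\pi_H\ne\pi_L$. Let $\bar\ell=\max_s\pi_H(s)/\pi_L(s)$, $\underline\ell=\min_s\pi_H(s)/\pi_L(s)$, $\gamma=\bar\ell/\underline\ell>1$; fix a signal $h$ with $\pi_H(h)/\pi_L(h)=\bar\ell$ and a signal $l$ with $\pi_H(l)/\pi_L(l)=\underline\ell$. A protocol on $M=\{1,\dots,m\}$ is $\Pi=(f,g,a)$ with $f:M\times S\to\Delta(M)$, $g\in\Delta(M)$, $a:M\to[0,1]$. For small $\epsilon_1,\epsilon_2>0$ define $\Pi(\epsilon_1,\epsilon_2)$ by: $g(2)=1$; $a(m)=1$ and $a(i)=0$ for $i\ne m$; with $c_h=(\pi_H(h)\pi_L(h))^{(m-2)/2}$ and $c_l=(\pi_H(l)\pi_L(l))^{(m-2)/2}$: states $1$ and $m$ are absorbing ($f(i,s)(i)=1$ for $i\in\{1,m\}$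 and all $s$); on signal $l$: from state $2$ move to $1$ with probability $c_h\epsilon_1$ and stay at $2$ otherwise, and from each state $i\in\{3,\dots,m-1\}$ move to $i-1$; on signal $h$: from state $m-1$ move to $m$ with probability $c_l\epsilon_2$ and stay at $m-1$ otherwise, and from each state $i\in\{2,\dots,m-2\}$ move to $i+1$; on any other signal, every state stays where it is. For this (parsimonious) protocol, $\mu_1^\theta(\Pi),\mu_m^\theta(\Pi)$ denote the probabilities that the Markov chain started at $m_0=2$, with signals drawn i.i.d. from $\pi_\theta$, is absorbed in state $1$ and state $m$ respectively. *)

From HB Require Import structures.
From mathcomp Require Import all_boot all_order all_algebra.
From mathcomp Require Import all_classical all_reals all_analysis.
Set Implicit Arguments. Unset Strict Implicit. Unset Printing Implicit Defensive.
Import Order.TTheory GRing.Theory Num.Theory numFieldNormedType.Exports.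
Local Open Scope ring_scope.

Section ProtocolDefs.
Context {R : realType} {S : finType}.

Definition lr (piH piL : S -> R) (s : S) : R := piH s / piL s.

(* x^((m-2)/2) for x >= 0, written as (sqrt x)^(m-2) *)
Definition halfpow (m : nat) (x : R) : R := Num.sqrt x ^+ (m - 2).

(* Transition function f of Pi(e1,e2) on states 1..m (nat labels):
   f i s j = probability of moving from state i to state j on signal s. *)
Definition proto_f (m : nat) (piH piL : S -> R) (h l : S) (e1 e2 : R)
    (i : nat) (s : S) (j : nat) : R :=
  let ch := halfpow m (piH h * piL h) in
  let cl := halfpow m (piH l * piL l) in
  if (i <= 1)%N || (m <= i)%N then (j == i)%:R
  else if s == l then
    (if i == 2%N then (j == 1%N)%:R * (ch * e1) + (j == 2%N)%:R * (1 - ch * e1)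
     else (j == i.-1)%:R)
  else if s == h then
    (if i == m.-1 then (j == m)%:R * (cl * e2) + (j == m.-1)%:R * (1 - cl * e2)
     else (j == i.+1)%:R)
  else (j == i)%:R.

Definition trans (f : nat -> S -> nat -> R) (pi : S -> R) (i j : nat) : R :=
  \sum_(s : S) pi s * f i s j.

(* distribution of the state after n signals, started at m0 = 2 (g(2) = 1);
   states are 1..m, the sum ranges over labels 0..m (label 0 never charged) *)
Fixpoint state_dist (m : nat) (f : nat -> S -> nat -> R) (pi : S -> R) (n : nat)
    : nat -> R :=
  match n with
  | 0 => fun j => (j == 2%N)%:R
  | n'.+1 => fun j =>
      \sum_(i < m.+1) state_dist m f pi n' i * trans f pi i j
  end.

(* probability of absorption in the absorbing state t: since t is absorbing,
   the events {X_n = t} increase to {absorbed in t}, so this is the limit *)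
Definition absorb_prob (m : nat) (f : nat -> S -> nat -> R) (pi : S -> R)
    (t : nat) : R :=
  limn (fun n => state_dist m f pi n t).

End ProtocolDefs.

(* If psi is harmonic for the one-step kernel, E[psi(X_n)] = psi(2) for every n.
   The interior states 2..m-1 are transient: every visit to 2 sends mass pi(l) c_h e1
   into the absorbing state 1, and every visit to j+1 sends mass pi(l) to j, so the
   occupation times of the interior states are summable and their mass tends to 0.
   Hence psi(1) P(absorbed at 1) + psi(m) P(absorbed at m) = psi(2).  As in gambler's
   ruin, the harmonic function with psi(1) = 0 and psi(m) = 1 has increments growing
   geometrically with ratio r = pi(l)/pi(h), the two boundary steps being scaled by
   the exit probabilities c_h e1 and c_l e2; this gives
     P(absorbed at m) = 1 / (1 + c_h e1 (r + ... + r^(m-3)) + r^(m-2) c_h e1 / (c_l e2)).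
   For e1 = k1 e and e2 = k2 e the middle term vanishes as e -> 0, and the last one
   equals k1 / (k2 G) under pi_H and G k1 / k2 under pi_L. *)

From HB Require Import structures.
From mathcomp Require Import all_boot all_order all_algebra.
From mathcomp Require Import all_classical all_reals all_analysis.
From mathcomp Require Import ring lra zify.
Import Order.TTheory GRing.Theory Num.Theory numFieldNormedType.Exports.
Set Implicit Arguments. Unset Strict Implicit. Unset Printing Implicit Defensive.
Local Open Scope ring_scope.
Local Open Scope classical_set_scope.

Lemma sumr_ord_delta (R : nzRingType) (n k : nat) (F : nat -> R) : (k < n)%N ->
  \sum_(j < n) (j == k :> nat)%:R * F j = F k.
Proof.
move=> kn; rewrite -[RHS](ifT (F k) 0 kn) -(big_ord1_eq +%R F) [RHS]big_mkcond /=.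
by apply: eq_bigr => j _; case: eqP; rewrite (mul1r, mul0r).
Qed.

Lemma sumr_ord_delta2 (R : nzRingType) (n a b : nat) (x y : R) (F : nat -> R) :
  (a < n)%N -> (b < n)%N ->
  \sum_(j < n) ((j == a :> nat)%:R * x + (j == b :> nat)%:R * y) * F j = x * F a + y * F b.
Proof.
move=> an bn; under eq_bigr do rewrite mulrDl -!mulrA.
by rewrite big_split /= !(@sumr_ord_delta _ _ _ (fun j => _ * F j)).
Qed.

Lemma halfpow_gt0 (R : realType) (m : nat) (x : R) : 0 < x -> 0 < halfpow m x.
Proof. by move=> x_gt0; rewrite /halfpow exprn_gt0 // sqrtr_gt0. Qed.

Lemma halfpowM (R : realType) (m : nat) (x y : R) : 0 <= x ->
  halfpow m (x * y) = halfpow m x * halfpow m y.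
Proof. by move=> x_ge0; rewrite /halfpow sqrtrM // exprMn. Qed.

Lemma halfpow_sqr (R : realType) (m : nat) (r : R) : 0 <= r ->
  halfpow m (r ^+ 2) = r ^+ (m - 2).
Proof. by move=> r_ge0; rewrite /halfpow sqrtr_sqr ger0_norm. Qed.

Section AbsorbingChain.
Variables (R : realType) (S : finType) (piH piL : S -> R) (h l : S) (e1 e2 : R).
Variables (pi : S -> R) (m : nat).
Hypothesis m_ge3 : (3 <= m)%N.
Hypothesis h_neq_l : h != l.

Local Notation f := (proto_f m piH piL h l e1 e2).
Local Notation dist n := (state_dist m f pi n).
Local Notation absorbing i := ((i <= 1)%N || (m <= i)%N).

Definition exit_low := halfpow m (piH h * piL h) * e1.
Definition exit_high := halfpow m (piH l * piL l) * e2.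

Definition down_op (i : nat) (psi : nat -> R) : R :=
  if i == 2%N then exit_low * psi 1%N + (1 - exit_low) * psi 2%N else psi i.-1.

Definition up_op (i : nat) (psi : nat -> R) : R :=
  if i == m.-1 then exit_high * psi m + (1 - exit_high) * psi m.-1 else psi i.+1.

Definition signal_op (i : nat) (s : S) (psi : nat -> R) : R :=
  if absorbing i then psi i
  else if s == l then down_op i psi
  else if s == h then up_op i psi
  else psi i.

Definition step_op (psi : nat -> R) (i : nat) : R :=
  if absorbing i then psi i
  else pi l * down_op i psi + pi h * up_op i psi + (1 - pi l - pi h) * psi i.

Definition harmonic (psi : nat -> R) := forall i, (i <= m)%N -> step_op psi i = psi i.

Definition expect (n : nat) (psi : nat -> R) : R := \sum_(j < m.+1) dist n j * psi j.

Lemma sum_proto_f i s (psi : nat -> R) : (i <= m)%N ->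
  \sum_(j < m.+1) f i s j * psi j = signal_op i s psi.
Proof.
move=> im; rewrite /signal_op /down_op /up_op /exit_low /exit_high /proto_f.
case: ifP => [_|/norP[]]; first exact: sumr_ord_delta.
rewrite -!ltnNge => i_gt1 i_ltm.
by repeat case: ifP => _; rewrite ?sumr_ord_delta2 ?sumr_ord_delta //; lia.
Qed.

Lemma proto_f_to0 i s : (0 < i)%N -> f i s 0 = 0.
Proof.
move=> i_gt0; rewrite /proto_f.
case: ifP => [|/norP[]]; first by case: i i_gt0 => [|[]].
rewrite -!ltnNge => i_gt1 i_ltm.
have [-> -> -> ->] : [/\ (0 == i)%N = false, (0 == i.-1)%N = false,
  (0 == m)%N = false & (0 == m.-1)%N = false] by split; apply/negbTE/eqP; lia.
by repeat case: ifP => _; rewrite ?mul0r ?addr0.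
Qed.

Lemma state_dist0 n : dist n 0 = 0.
Proof.
elim: n => [//|n IHn] /=; rewrite big1 // => -[[|i] ? _] /=; first by rewrite IHn mul0r.
by rewrite /trans big1 ?mulr0 // => s _; rewrite proto_f_to0 ?mulr0.
Qed.

Lemma expect_split n (psi : nat -> R) : expect n psi =
  dist n 1 * psi 1%N + dist n m * psi m + \sum_(2 <= j < m) dist n j * psi j.
Proof.
rewrite /expect -(big_mkord (fun=> true) (fun j => dist n j * psi j)) big_nat_recr //=.
rewrite big_ltn; last lia.
by rewrite big_ltn; [rewrite state_dist0 mul0r add0r; ring | lia].
Qed.

Hypothesis pi_sum1 : \sum_(s : S) pi s = 1.

Lemma sum_pi_others : \sum_(s | (s != l) && (s != h)) pi s = 1 - pi l - pi h.
Proof.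
by rewrite -pi_sum1 [in RHS](bigD1 l) //= [in RHS](bigD1 h) //=; ring.
Qed.

Lemma sum_trans_step_op i (psi : nat -> R) : (i <= m)%N ->
  \sum_(j < m.+1) trans f pi i j * psi j = step_op psi i.
Proof.
move=> im; under eq_bigr do rewrite /trans mulr_suml.
rewrite exchange_big /=.
under eq_bigr do (under eq_bigr do rewrite -mulrA; rewrite -mulr_sumr sum_proto_f //).
rewrite (bigD1 l) //= (bigD1 h) //=.
rewrite /signal_op /step_op eqxx (negbTE h_neq_l) eqxx.
under eq_bigr => s /andP[sl sh] do rewrite (negbTE sl) (negbTE sh) if_same.
by rewrite -big_distrl sum_pi_others /=; case: ifP => _; ring.
Qed.

Lemma expect_succ n (psi : nat -> R) : expect n.+1 psi = expect n (step_op psi).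
Proof.
rewrite /expect /=; under eq_bigr do rewrite mulr_suml.
rewrite exchange_big /=; apply: eq_bigr => i _.
rewrite -sum_trans_step_op; last by rewrite -ltnS.
by rewrite mulr_sumr; apply: eq_bigr => j _; rewrite mulrA.
Qed.

Lemma expect_harmonic n (psi : nat -> R) : harmonic psi -> expect n psi = psi 2%N.
Proof.
move=> psi_harm; elim: n => [|n IHn].
  by rewrite /expect (@sumr_ord_delta _ _ _ psi) //; lia.
by rewrite expect_succ -IHn; apply: eq_bigr => j _; rewrite psi_harm // -ltnS.
Qed.

Hypothesis pi_gt0 : forall s, 0 < pi s.
Hypotheses (exit_low_gt0 : 0 < exit_low) (exit_low_le1 : exit_low <= 1).
Hypotheses (exit_high_gt0 : 0 < exit_high) (exit_high_le1 : exit_high <= 1).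

Let pi_ge0 s : 0 <= pi s := ltW (pi_gt0 s).

Lemma proto_f_ge0 i s j : 0 <= f i s j.
Proof.
move: (ltW exit_low_gt0) exit_low_le1 (ltW exit_high_gt0) exit_high_le1.
rewrite /exit_low /exit_high /proto_f => a0 a1 b0 b1.
by repeat case: ifP => _; rewrite ?ler0n ?addr_ge0 // mulr_ge0 ?ler0n ?subr_ge0.
Qed.

Lemma trans_ge0 i j : 0 <= trans f pi i j.
Proof. by apply: sumr_ge0 => s _; rewrite mulr_ge0 ?proto_f_ge0. Qed.

Lemma trans_ge_term i s j : pi s * f i s j <= trans f pi i j.
Proof.
rewrite /trans (bigD1 s) //= lerDl.
by apply: sumr_ge0 => t _; rewrite mulr_ge0 ?proto_f_ge0.
Qed.

Lemma state_dist_ge0 n j : 0 <= dist n j.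
Proof.
elim: n j => [|n IHn] j /=; first exact: ler0n.
by apply: sumr_ge0 => i _; rewrite mulr_ge0 ?trans_ge0.
Qed.

Lemma harmonic1 : harmonic (fun=> 1).
Proof. by move=> i _; rewrite /step_op /down_op /up_op; repeat case: ifP => _; ring. Qed.

Lemma state_dist_le1 n j : (j <= m)%N -> dist n j <= 1.
Proof.
move=> jm; rewrite -(expect_harmonic n harmonic1) /expect (bigD1 (Ordinal (n:=m.+1) jm)) //=.
rewrite mulr1 lerDl; apply: sumr_ge0 => i _; rewrite mulr1; exact: state_dist_ge0.
Qed.

Lemma state_dist_succ_ge n i j : (i <= m)%N -> dist n i * trans f pi i j <= dist n.+1 j.
Proof.
move=> im; rewrite [dist n.+1 j]/= (bigD1 (Ordinal (n:=m.+1) im)) //= lerDl.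
by apply: sumr_ge0 => k _; rewrite mulr_ge0 ?state_dist_ge0 ?trans_ge0.
Qed.

Lemma state_dist_succ_ge2 n i i' j : i != i' -> (i <= m)%N -> (i' <= m)%N ->
  dist n i * trans f pi i j + dist n i' * trans f pi i' j <= dist n.+1 j.
Proof.
move=> ii' im i'm; rewrite [dist n.+1 j]/= (bigD1 (Ordinal (n:=m.+1) im)) //=.
rewrite (bigD1 (Ordinal (n:=m.+1) i'm)) /=; last by rewrite eq_sym.
by rewrite addrA lerDl; apply: sumr_ge0 => k _; rewrite mulr_ge0 ?state_dist_ge0 ?trans_ge0.
Qed.

Lemma trans11 : trans f pi 1 1 = 1.
Proof. by rewrite /trans -pi_sum1; apply: eq_bigr => s _; rewrite /proto_f /= mulr1. Qed.

Lemma trans21_ge : pi l * exit_low <= trans f pi 2 1.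
Proof.
apply: le_trans (trans_ge_term 2 l 1); rewrite /proto_f /exit_low /= eqxx ifF; last lia.
by rewrite mul1r mul0r addr0.
Qed.

Lemma trans_down_ge k : (1 < k)%N -> (k.+1 < m)%N -> pi l <= trans f pi k.+1 k.
Proof.
move=> k_gt1 km; apply: le_trans (trans_ge_term k.+1 l k).
by rewrite /proto_f /= eqxx ifF ?ifF ?eqxx ?mulr1 //; lia.
Qed.

Lemma state_dist1_succ_ge n : dist n 1 + pi l * exit_low * dist n 2 <= dist n.+1 1.
Proof.
apply: le_trans (state_dist_succ_ge2 (i := 1) (i' := 2) n 1 _ _ _) => //; [|lia..].
rewrite trans11 mulr1 lerD2l mulrC ler_wpM2l ?state_dist_ge0 //.
exact: trans21_ge.
Qed.

Lemma state_dist_down_succ_ge n k : (1 < k)%N -> (k.+1 < m)%N ->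
  pi l * dist n k.+1 <= dist n.+1 k.
Proof.
move=> k_gt1 km; apply: le_trans (state_dist_succ_ge (i := k.+1) n k _); last lia.
by rewrite mulrC ler_wpM2l ?state_dist_ge0 ?trans_down_ge.
Qed.

Lemma sum_state_dist2_le N : pi l * exit_low * \sum_(n < N) dist n 2 <= dist N 1.
Proof.
elim: N => [|N IHN]; first by rewrite big_ord0 mulr0 state_dist_ge0.
by rewrite big_ord_recr /= mulrDr; apply: le_trans (state_dist1_succ_ge N); exact: lerD.
Qed.

Lemma state_dist_interior_summable j : (1 < j < m)%N ->
  exists B, forall N, \sum_(n < N) dist n j <= B.
Proof.
(* Occupation of 2 is paid for by absorption in 1, occupation of j + 1 by that of j. *)
case/andP; elim: j => [//|j IHj] j_gt1 j_ltm.
case: (ltngtP j 1) => [|j_gt1'|->]; first lia.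
  have [B HB] := IHj j_gt1' (ltnW j_ltm).
  exists ((pi l)^-1 * B) => N; rewrite ler_pdivlMl // mulr_sumr.
  apply: le_trans (HB N.+1); rewrite big_ord_recl /= -[X in X <= _]add0r.
  by apply: lerD; [exact: ler0n | apply: ler_sum => n _; exact: state_dist_down_succ_ge].
exists ((pi l * exit_low)^-1 * 1) => N; rewrite ler_pdivlMl; last exact: mulr_gt0.
by apply: le_trans (sum_state_dist2_le N) _; apply: state_dist_le1; lia.
Qed.

Lemma state_dist_interior_cvg0 j : (1 < j < m)%N -> (fun n => dist n j) @ \oo --> 0.
Proof.
move=> j_int; apply: cvg_series_cvg_0; apply: nondecreasing_is_cvgn.
  by apply: nondecreasing_series => n _ _; exact: state_dist_ge0.
have [B HB] := state_dist_interior_summable j_int.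
by exists B => _ [N _ <-]; rewrite /series /= big_mkord; exact: HB.
Qed.

Lemma harmonic_boundary_cvg (psi : nat -> R) : harmonic psi ->
  (fun n => dist n 1 * psi 1%N + dist n m * psi m) @ \oo --> psi 2%N.
Proof.
move=> psi_harm.
have boundaryE n : dist n 1 * psi 1%N + dist n m * psi m =
    psi 2%N - \sum_(2 <= j < m | (2 <= j < m)%N && true) dist n j * psi j.
  by rewrite -big_nat_cond -(expect_harmonic n psi_harm) expect_split addrK.
rewrite (funext boundaryE) -[X in _ --> X]subr0; apply: cvgB; first exact: cvg_cst.
have sum0 : \sum_(2 <= j < m | (2 <= j < m)%N && true) 0 * psi j = 0 :> R.
  by rewrite big1 // => j _; rewrite mul0r.
rewrite -[X in _ --> X]sum0.
apply: (cvg_big add_continuous) => // j /andP[j_int _].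
by apply: cvgMl; apply: state_dist_interior_cvg0.
Qed.

Definition odds := pi l / pi h.
Definition odds_sum (k : nat) := \sum_(i < k) odds ^+ i.+1.
Definition hit_high :=
  (1 + exit_low * odds_sum (m - 3) + odds ^+ (m - 2) * exit_low / exit_high)^-1.

(* The gambler's-ruin harmonic function; [hit_high] normalizes its value at m to 1. *)
Definition hit_high_fun (j : nat) : R :=
  match j with
  | 0 | 1 => 0
  | k.+2 => if (m <= k.+2)%N then 1 else hit_high * (1 + exit_low * odds_sum k)
  end.

Lemma odds_ge0 : 0 <= odds.
Proof. by rewrite divr_ge0 ?ltW. Qed.

Lemma odds_sum_ge0 k : 0 <= odds_sum k.
Proof. by apply: sumr_ge0 => i _; rewrite exprn_ge0 ?odds_ge0. Qed.

Lemma hit_high_fun2 : hit_high_fun 2 = hit_high.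
Proof. by rewrite /= ifF /odds_sum ?big_ord0 ?mulr0 ?addr0 ?mulr1 //; lia. Qed.

Lemma hit_high_fun_m : hit_high_fun m = 1.
Proof.
have [k m_eq] : exists k, m = k.+2 by exists (m - 2)%N; lia.
by rewrite [in hit_high_fun m]m_eq /= ifT //; lia.
Qed.

Lemma hit_high_fun_interior k : (k.+2 < m)%N ->
  hit_high_fun k.+2 = hit_high * (1 + exit_low * odds_sum k).
Proof. by move=> km; rewrite /= ifF //; lia. Qed.

Lemma hit_high_fun_down k : (k.+3 <= m)%N ->
  down_op k.+2 hit_high_fun = hit_high_fun k.+2 - hit_high * exit_low * odds ^+ k.
Proof.
move=> km; rewrite /down_op; case: k km => [|k] km.
  by rewrite hit_high_fun2 /=; ring.
rewrite !hit_high_fun_interior; [|lia..].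
by rewrite /odds_sum big_ord_recr /=; ring.
Qed.

Lemma hit_high_fun_up k : (k.+3 <= m)%N ->
  up_op k.+2 hit_high_fun = hit_high_fun k.+2 + hit_high * exit_low * odds ^+ k.+1.
Proof.
move=> km; rewrite /up_op; case: (eqVneq k.+3 m) => [m_eq|m_neq].
  rewrite (_ : m.-1 = k.+2) ?eqxx; last lia.
  rewrite hit_high_fun_m hit_high_fun_interior; last lia.
  have [m_sub3 m_sub2] : (m - 3 = k)%N /\ (m - 2 = k.+1)%N by lia.
  rewrite /hit_high m_sub3 m_sub2; field; rewrite lt0r_neq0 //=; apply: lt0r_neq0.
  apply: ltr_wpDr; first exact: mulr_ge0 (exprn_ge0 _ odds_ge0) (ltW exit_low_gt0).
  apply: mulr_gt0 => //; apply: ltr_wpDr; last exact: ltr01.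
  exact: mulr_ge0 (ltW exit_low_gt0) (odds_sum_ge0 k).
rewrite ifF; last (apply/negbTE/eqP; lia).
rewrite !hit_high_fun_interior; [|lia..].
by rewrite /odds_sum big_ord_recr /=; ring.
Qed.

Lemma hit_high_fun_harmonic : harmonic hit_high_fun.
Proof.
move=> i im; rewrite /step_op; case: ifP => // /norP[]; rewrite -!ltnNge.
case: i im => [|[|k]] // im _ km.
rewrite hit_high_fun_down ?hit_high_fun_up // /odds exprS; field; exact: lt0r_neq0.
Qed.

Lemma state_dist_high_cvg : (fun n => dist n m) @ \oo --> hit_high.
Proof.
have := harmonic_boundary_cvg hit_high_fun_harmonic.
by rewrite hit_high_fun2 hit_high_fun_m; under eq_fun do rewrite mulr0 add0r mulr1.
Qed.

Lemma absorb_prob_high : absorb_prob m f pi m = hit_high.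
Proof. exact: cvg_lim state_dist_high_cvg. Qed.

Lemma absorb_prob_low : absorb_prob m f pi 1 = 1 - hit_high.
Proof.
apply: cvg_lim => //.
have -> : (fun n => dist n 1) = (fun n => dist n 1 * 1 + dist n m * 1) - (fun n => dist n m).
  by apply/funext => n; rewrite !fctE !mulr1 addrK.
exact: cvgB (harmonic_boundary_cvg harmonic1) state_dist_high_cvg.
Qed.

End AbsorbingChain.

Section VanishingExits.
Variables (R : realType) (S : finType) (piH piL pi : S -> R) (h l : S) (m : nat).
Variables (k1 k2 : R).
Hypothesis m_ge3 : (3 <= m)%N.
Hypothesis h_neq_l : h != l.
Hypotheses (piH_gt0 : forall s, 0 < piH s) (piL_gt0 : forall s, 0 < piL s).
Hypotheses (pi_gt0 : forall s, 0 < pi s) (pi_sum1 : \sum_(s : S) pi s = 1).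
Hypotheses (k1_gt0 : 0 < k1) (k2_gt0 : 0 < k2).

Local Notation ch := (halfpow m (piH h * piL h)).
Local Notation cl := (halfpow m (piH l * piL l)).
Local Notation chain e := (proto_f m piH piL h l (k1 * e) (k2 * e)).

Let ch_gt0 : 0 < ch := halfpow_gt0 m (mulr_gt0 (piH_gt0 h) (piL_gt0 h)).
Let cl_gt0 : 0 < cl := halfpow_gt0 m (mulr_gt0 (piH_gt0 l) (piL_gt0 l)).

Definition vanishing_slope := ch * k1 * odds_sum h l pi (m - 3).
Definition vanishing_ratio := odds h l pi ^+ (m - 2) * (ch * k1) / (cl * k2).

Lemma absorb_prob_near0 : \forall e \near 0^'+,
  absorb_prob m (chain e) pi m = (1 + e * vanishing_slope + vanishing_ratio)^-1 /\
  absorb_prob m (chain e) pi 1 = 1 - (1 + e * vanishing_slope + vanishing_ratio)^-1.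
Proof.
near=> e.
have e_gt0 : 0 < e by near: e; exact: nbhs_right_gt.
have el_lt : e < (ch * k1)^-1 by near: e; apply: nbhs_right_lt; rewrite invr_gt0 mulr_gt0.
have eh_lt : e < (cl * k2)^-1 by near: e; apply: nbhs_right_lt; rewrite invr_gt0 mulr_gt0.
have el_gt0 : 0 < exit_low piH piL h (k1 * e) m by rewrite /exit_low !mulr_gt0.
have eh_gt0 : 0 < exit_high piH piL l (k2 * e) m by rewrite /exit_high !mulr_gt0.
have el_le1 : exit_low piH piL h (k1 * e) m <= 1.
  by rewrite /exit_low mulrA ltW // -ltr_pdivlMl ?mulr_gt0 // mulr1.
have eh_le1 : exit_high piH piL l (k2 * e) m <= 1.
  by rewrite /exit_high mulrA ltW // -ltr_pdivlMl ?mulr_gt0 // mulr1.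
have hitE : hit_high piH piL h l (k1 * e) (k2 * e) pi m =
    (1 + e * vanishing_slope + vanishing_ratio)^-1.
  rewrite /hit_high /exit_low /exit_high /vanishing_slope /vanishing_ratio.
  by congr (_^-1); field; rewrite !lt0r_neq0.
by rewrite absorb_prob_high ?absorb_prob_low ?hitE.
Unshelve. all: by end_near.
Qed.

Lemma absorb_prob_vanishing_exits :
  (fun e => absorb_prob m (chain e) pi m) @ 0^'+ --> (1 + vanishing_ratio)^-1 /\
  (fun e => absorb_prob m (chain e) pi 1) @ 0^'+ --> (1 - (1 + vanishing_ratio)^-1).
Proof.
have ratio_ge0 : 0 <= vanishing_ratio :=
  divr_ge0 (mulr_ge0 (exprn_ge0 _ (odds_ge0 h l pi_gt0)) (ltW (mulr_gt0 ch_gt0 k1_gt0)))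
    (ltW (mulr_gt0 cl_gt0 k2_gt0)).
have lim : (fun e => (1 + e * vanishing_slope + vanishing_ratio)^-1) @ 0^'+ -->
    (1 + vanishing_ratio)^-1.
  have denom : (fun e => 1 + e * vanishing_slope + vanishing_ratio) @ 0^'+ -->
      1 + 0 * vanishing_slope + vanishing_ratio.
    apply: cvgD; last exact: cvg_cst.
    apply: cvgD; first exact: cvg_cst.
    by apply: cvgMl; apply: cvg_within_filter; exact: cvg_id.
  rewrite mul0r addr0 in denom.
  by apply: cvgV; first by rewrite lt0r_neq0 // ltr_wpDr.
split; apply: cvg_trans (near_eq_cvg _) _.
- by apply: filterS absorb_prob_near0 => e [-> _].
- exact: lim.
- by apply: filterS absorb_prob_near0 => e [_ ->].
- by apply: cvgB; [exact: cvg_cst | exact: lim].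
Qed.

End VanishingExits.

Section LikelihoodRatios.
Variables (R : realType) (S : finType) (piH piL : S -> R) (h l : S).
Hypotheses (piH_gt0 : forall s, 0 < piH s) (piL_gt0 : forall s, 0 < piL s).

Local Notation gamma := (lr piH piL h / lr piH piL l).

Let lr_gt0 s : 0 < lr piH piL s := divr_gt0 (piH_gt0 s) (piL_gt0 s).

Lemma halfpow_low_signal m : halfpow m (piH l * piL l) =
  halfpow m gamma * (piH l / piH h) ^+ (m - 2) * halfpow m (piH h * piL h).
Proof.
rewrite -halfpow_sqr ?divr_ge0 ?ltW // -!halfpowM ?mulr_ge0 ?sqr_ge0 ?divr_ge0 ?ltW ?invr_gt0 //.
by congr halfpow; rewrite /lr; field; rewrite !lt0r_neq0.
Qed.

Lemma halfpow_high_signal m : (piL l / piL h) ^+ (m - 2) * halfpow m (piH h * piL h) =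
  halfpow m gamma * halfpow m (piH l * piL l).
Proof.
rewrite -halfpow_sqr ?divr_ge0 ?ltW // -!halfpowM ?sqr_ge0 ?divr_ge0 ?ltW ?invr_gt0 //.
by congr halfpow; rewrite /lr; field; rewrite !lt0r_neq0.
Qed.

Lemma lr_argmax_neq_argmin : \sum_s piH s = 1 -> \sum_s piL s = 1 -> piH <> piL ->
  (forall s, lr piH piL s <= lr piH piL h) -> (forall s, lr piH piL l <= lr piH piL s) ->
  h != l.
Proof.
move=> sumH sumL piH_neq hmax lmin; apply/eqP => h_eq_l; apply: piH_neq.
have lr_const s : lr piH piL s = lr piH piL h.
  by apply/eqP; rewrite eq_le hmax h_eq_l lmin.
have piHE s : piH s = lr piH piL h * piL s.
  by rewrite -(lr_const s) /lr mulrVK // unitfE lt0r_neq0.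
have lr_h1 : lr piH piL h = 1 by rewrite -sumH (eq_bigr _ (fun s _ => piHE s)) -mulr_sumr sumL mulr1.
by apply/funext => s; rewrite piHE lr_h1 mul1r.
Qed.

End LikelihoodRatios.

Theorem mainTheorem13 (R : realType) (S : finType) (piH piL : S -> R)
  (hH : forall s, 0 < piH s) (hL : forall s, 0 < piL s)
  (sH : \sum_(s : S) piH s = 1) (sL : \sum_(s : S) piL s = 1)
  (hne : piH <> piL)
  (h l : S)
  (hmax : forall s, lr piH piL s <= lr piH piL h)
  (lmin : forall s, lr piH piL l <= lr piH piL s)
  (m : nat) (hm : (3 <= m)%N) (k1 k2 : R) (hk1 : 0 < k1) (hk2 : 0 < k2) :
  let gamma := lr piH piL h / lr piH piL l in
  let G := halfpow m gamma in
  ((fun e => absorb_prob m (proto_f m piH piL h l (k1 * e) (k2 * e)) piH m)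
     @ 0^'+ --> (k2 / k1 * G) / (1 + k2 / k1 * G))
  /\
  ((fun e => absorb_prob m (proto_f m piH piL h l (k1 * e) (k2 * e)) piL 1%N)
     @ 0^'+ --> (k1 / k2 * G) / (1 + k1 / k2 * G)).
Proof.
move=> gamma G.
have h_neq_l := lr_argmax_neq_argmin hL sH sL hne hmax lmin.
have G_gt0 : 0 < G by apply: halfpow_gt0; rewrite !divr_gt0.
have ch_gt0 : 0 < halfpow m (piH h * piL h) by apply: halfpow_gt0; rewrite mulr_gt0.
have cl_gt0 : 0 < halfpow m (piH l * piL l) by apply: halfpow_gt0; rewrite mulr_gt0.
have [highH _] := absorb_prob_vanishing_exits (k1 := k1) (k2 := k2) hm h_neq_l hH hL hH sH hk1 hk2.
have [_ lowL] := absorb_prob_vanishing_exits (k1 := k1) (k2 := k2) hm h_neq_l hH hL hL sL hk1 hk2.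
split.
- have -> : k2 / k1 * G / (1 + k2 / k1 * G) = (1 + vanishing_ratio piH piL piH h l m k1 k2)^-1.
    rewrite /vanishing_ratio /odds (halfpow_low_signal h l hH hL) -/gamma -/G.
    have odds_pow_gt0 : 0 < (piH l / piH h) ^+ (m - 2) by rewrite exprn_gt0 ?divr_gt0.
    by field; rewrite !lt0r_neq0 ?addr_gt0 ?mulr_gt0.
  exact: highH.
- have -> : k1 / k2 * G / (1 + k1 / k2 * G) = 1 - (1 + vanishing_ratio piH piL piL h l m k1 k2)^-1.
    rewrite /vanishing_ratio /odds mulrA (halfpow_high_signal h l hH hL) -/gamma -/G.
    by field; rewrite !lt0r_neq0 ?addr_gt0 ?mulr_gt0.
  exact: lowL.
Qed.
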